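(* Let $\{\psi_i\}_{i=1}^N$ be a frame for $\mathbb{R}^d$ with analysis operator $\Psi$ and frame operator $S=\Psi^\top\Psi$, and let $\{\varphi_i\}_{i=1}^N$ be its canonical dual frame, $\varphi_i=S^{-1}\psi_i$. Then the set $\{(\varphi_i,\psi_i)\}_{i=1}^N$ is cyclically monotone.
   Context: A finite frame is a finite spanning set of $\mathbb{R}^d$; its analysis operator $\Psi\in\mathbb{R}^{N\times d}$ has rows $\psi_i^\top$. A set $S\subset\mathbb{R}^d\times\mathbb{R}^d$ is cyclically monotone if for every finite subset $\{(x_1,y_1),\dots,(x_n,y_n)\}\subset S$ and every permutation $\sigma$ of $\{1,\dots,n\}$, $\sum_i\langle x_i,y_i\rangle\ge\sum_i\langle x_i,y_{\sigma(i)}\rangle$. *)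

From mathcomp Require Import all_boot all_order all_algebra all_fingroup.
Set Implicit Arguments. Unset Strict Implicit. Unset Printing Implicit Defensive.
Import Order.TTheory GRing.Theory Num.Theory.
Local Open Scope ring_scope.

Definition inner (R : realFieldType) (d : nat) (x y : 'cV[R]_d) : R :=
  \sum_(k < d) x k 0 * y k 0.

Definition cyclically_monotone (R : realFieldType) (d : nat)
  (S : 'cV[R]_d * 'cV[R]_d -> Prop) : Prop :=
  forall (n : nat) (x y : 'I_n -> 'cV[R]_d),
    injective (fun i => (x i, y i)) ->
    (forall i, S (x i, y i)) ->
    forall s : 'S_n,
      \sum_(i < n) inner (x i) (y (s i)) <= \sum_(i < n) inner (x i) (y i).

Definition frame_vec (R : realFieldType) (N d : nat) (Psi : 'M[R]_(N, d))
  (i : 'I_N) : 'cV[R]_d := (row i Psi)^T.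

Definition frame_op (R : realFieldType) (N d : nat) (Psi : 'M[R]_(N, d))
  : 'M[R]_d := Psi^T *m Psi.

Definition canon_dual (R : realFieldType) (N d : nat) (Psi : 'M[R]_(N, d))
  (i : 'I_N) : 'cV[R]_d := invmx (frame_op Psi) *m frame_vec Psi i.

(* {psi_i} is a frame (finite spanning set of R^d): the rows of Psi span R^d. *)
Definition is_frame (R : realFieldType) (N d : nat) (Psi : 'M[R]_(N, d)) : Prop :=
  row_full Psi.

From mathcomp Require Import all_boot all_order all_algebra all_fingroup.
From mathcomp Require Import reals.
From mathcomp Require Import lra.
Set Implicit Arguments. Unset Strict Implicit. Unset Printing Implicit Defensive.
Import Order.TTheory GRing.Theory Num.Theory.
Local Open Scope ring_scope.

(* The frame operator S = Psi^T Psi is positive definite, hence invertible,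
   and S^-1 = C^T C for C = Psi S^-1.  So the dual pairs are
   (C^T C psi_i, psi_i) and sum_i <phi_i, psi_s(i)> = sum_i <C psi_i, C psi_s(i)>,
   which by 2 <a, b> <= <a, a> + <b, b> is at most the average of
   sum_i |C psi_i|^2 and sum_i |C psi_s(i)|^2, two equal sums. *)

Lemma innerE (R : realFieldType) d (x y : 'cV[R]_d) :
  inner x y = (x^T *m y) 0 0.
Proof. by rewrite /inner mxE; apply: eq_bigr => k _; rewrite mxE. Qed.

Section Inner.

Variables (R : realFieldType) (d : nat).
Implicit Types x y u v : 'cV[R]_d.

Lemma inner_self_eq0 x : inner x x = 0 -> x = 0.
Proof.
move=> /psumr_eq0P x0; apply/matrixP => k l; rewrite ord1 mxE.
have /eqP := x0 (fun i _ => sqr_ge0 (x i 0)) k isT.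
by rewrite mulf_eq0 orbb => /eqP.
Qed.

Lemma mul2_inner_le x y : 2 * inner x y <= inner x x + inner y y.
Proof.
rewrite /inner mulr_sumr -big_split /=; apply: ler_sum => k _.
have := sqr_ge0 (x k 0 - y k 0); nra.
Qed.

Lemma sum_inner_perm_le n (w : 'I_n -> 'cV[R]_d) (s : 'S_n) :
  \sum_(i < n) inner (w i) (w (s i)) <= \sum_(i < n) inner (w i) (w i).
Proof.
have le2 : 2 * \sum_(i < n) inner (w i) (w (s i)) <=
    \sum_(i < n) inner (w i) (w i) + \sum_(i < n) inner (w (s i)) (w (s i)).
  by rewrite mulr_sumr -big_split /=; apply: ler_sum => i _; apply: mul2_inner_le.
have reindex_s : \sum_(i < n) inner (w (s i)) (w (s i)) =
                 \sum_(i < n) inner (w i) (w i).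
  by rewrite [RHS](reindex_inj (@perm_inj _ s)).
rewrite reindex_s in le2; lra.
Qed.

Lemma inner_gram m (C : 'M[R]_(m, d)) u v :
  inner (C^T *m C *m u) v = inner (C *m u) (C *m v).
Proof. by rewrite !innerE !trmx_mul !trmxK !mulmxA. Qed.

End Inner.

Lemma cyclically_monotone_sub (R : realFieldType) d
    (S T : 'cV[R]_d * 'cV[R]_d -> Prop) :
  (forall p, S p -> T p) -> cyclically_monotone T -> cyclically_monotone S.
Proof. by move=> ST monoT n x y xy_inj xyS; apply: monoT => // i; apply: ST. Qed.

Lemma gram_cyclically_monotone (R : realFieldType) m d (C : 'M[R]_(m, d)) :
  cyclically_monotone (fun p => exists u, p = (C^T *m C *m u, u)).
Proof.
move=> n x y _ xy_gram s.
have xE i : x i = C^T *m C *m y i by have [u [-> ->]] := xy_gram i.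
under eq_bigr => i _ do rewrite xE inner_gram.
under [X in _ <= X]eq_bigr => i _ do rewrite xE inner_gram.
exact: (sum_inner_perm_le (fun i => C *m y i)).
Qed.

Section FrameOperator.

Variables (R : realFieldType) (N d : nat) (Psi : 'M[R]_(N, d)).

Lemma frame_op_tr : (frame_op Psi)^T = frame_op Psi.
Proof. by rewrite /frame_op trmx_mul trmxK. Qed.

Lemma frame_op_unit : is_frame Psi -> frame_op Psi \in unitmx.
Proof.
move=> Psi_full; rewrite -row_free_unit; apply: inj_row_free => v vS0.
have Psi_tr_free : row_free Psi^T by rewrite /row_free mxrank_tr.
apply/eqP; rewrite -(mulmx_free_eq0 _ Psi_tr_free) -trmx_eq0 trmx_mul trmxK.
apply/eqP/inner_self_eq0; rewrite innerE trmx_mul trmxK mulmxA.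
by rewrite -[v *m _ *m _]mulmxA -/(frame_op Psi) vS0 mul0mx mxE.
Qed.

Lemma invmx_frame_op_gram : frame_op Psi \in unitmx ->
  invmx (frame_op Psi) =
  (Psi *m invmx (frame_op Psi))^T *m (Psi *m invmx (frame_op Psi)).
Proof.
move=> S_unit; rewrite trmx_mul trmx_inv frame_op_tr mulmxA.
by rewrite -[_ *m Psi^T *m Psi]mulmxA -/(frame_op Psi) mulVmx // mul1mx.
Qed.

End FrameOperator.

Theorem mainTheorem6 (R : realType) (N d : nat) (Psi : 'M[R]_(N, d)) :
  is_frame Psi ->
  cyclically_monotone
    (fun p : 'cV[R]_d * 'cV[R]_d =>
       exists i : 'I_N, p = (canon_dual Psi i, frame_vec Psi i)).
Proof.
move=> /frame_op_unit S_unit.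
apply: (cyclically_monotone_sub _
  (gram_cyclically_monotone (C := Psi *m invmx (frame_op Psi)))).
move=> _ [i ->]; exists (frame_vec Psi i).
by rewrite /canon_dual -invmx_frame_op_gram.
Qed.
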